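(* Let $(X,d,\mu)$ be an unbounded space of homogeneous type with geometric constants $\tau$ and $A$, let $0<\gamma<\tfrac1\tau$, $H\geq1$, and let $\mathcal{K}$ be a family of symmetric Markov kernels on $X$ with $\mathcal{K}\subset\mathcal{H}(\gamma,H)$. For $K\in\mathcal{K}$ define $\widetilde K(x,x)=K(x,x)$ and, for $x\neq y$, \[\widetilde K(x,y)=\frac{1}{\mu(B(y,\gamma d(x,y)))}\int_{B(y,\gamma d(x,y))}K(x,z)\,d\mu(z).\] Then for every $K\in\mathcal{K}$ and every $(x,y)\in X\times X$, $K(x,y)\leq H\widetilde K(x,y)\leq H^2K(x,y)$.
   Context: A quasi-distance on $X$ is a nonnegative symmetric function $d$ vanishing exactly on the diagonal with $d(x,z)\leq\tau[d(x,y)+d(y,z)]$, $\tau\geq1$; balls are $B(x,r)=\{y:d(x,y)<r\}$. $(X,d,\mu)$ is a space of homogeneous type if $\mu$ is a positive measure on a $\sigma$-algebra containing all balls with $0<\mu(B(x,2r))\leq A\mu(B(x,r))<\infty$; $\tau,A$ are the geometric constants; unbounded means $\mu(X)=\infty$. A symmetric Markov kernel is a nonnegative symmetric measurable $K$ on $X\times X$ with $\int_XK(x,y)d\mu(y)=1$ for all $x$. $K\in\mathcal{H}(\gamma,H)$ means $\sup_{\eta\in B(y,\gamma d(x,y))}K(x,\eta)\leq H\inf_{\eta\in B(y,\gamma d(x,y))}K(x,\eta)$ for all $x\neq y$. *)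

From HB Require Import structures.
From mathcomp Require Import all_boot all_order all_algebra.
From mathcomp Require Import all_classical all_reals all_analysis.
Set Implicit Arguments. Unset Strict Implicit. Unset Printing Implicit Defensive.
Import Order.TTheory GRing.Theory Num.Theory.
Local Open Scope classical_set_scope.
Local Open Scope ring_scope.

Section Defs.
Context {d : measure_display} {X : measurableType d} {R : realType}.

Definition qball (dist : X -> X -> R) (x : X) (r : R) : set X :=
  [set y | dist x y < r].

Definition quasi_distance (dist : X -> X -> R) (tau : R) : Prop :=
  1 <= tau /\
  (forall x y, 0 <= dist x y) /\
  (forall x y, dist x y = dist y x) /\
  (forall x y, dist x y = 0 <-> x = y) /\
  (forall x y z, dist x z <= tau * (dist x y + dist y z)).

Definition homogeneous_type (dist : X -> X -> R) (mu : {measure set X -> \bar R})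
  (tau A : R) : Prop :=
  quasi_distance dist tau /\
  (forall x r, measurable (qball dist x r)) /\
  (forall x r, 0 < r ->
     (0 < mu (qball dist x (2 * r)))%E /\
     (mu (qball dist x (2 * r)) <= A%:E * mu (qball dist x r))%E /\
     (mu (qball dist x r) < +oo)%E).

Definition unbounded_space (mu : {measure set X -> \bar R}) : Prop :=
  mu setT = +oo%E.

Definition sym_markov_kernel (mu : {measure set X -> \bar R}) (K : X -> X -> R)
  : Prop :=
  (forall x y, 0 <= K x y) /\
  (forall x y, K x y = K y x) /\
  measurable_fun setT (fun p : X * X => K p.1 p.2) /\
  (forall x, (\int[mu]_(y in setT) (K x y)%:E)%E = 1%E).

Definition class_H (dist : X -> X -> R) (gamma H : R) (K : X -> X -> R) : Prop :=
  forall x y, x <> y ->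
    (ereal_sup [set (K x eta)%:E | eta in qball dist y (gamma * dist x y)]
     <= H%:E * ereal_inf [set (K x eta)%:E | eta in qball dist y (gamma * dist x y)])%E.

Definition Ktilde (dist : X -> X -> R) (mu : {measure set X -> \bar R})
  (gamma : R) (K : X -> X -> R) (x y : X) : \bar R :=
  if pselect (x = y) then (K x x)%:E
  else (((fine (mu (qball dist y (gamma * dist x y))))^-1)%:E *
       \int[mu]_(z in qball dist y (gamma * dist x y)) (K x z)%:E)%E.

End Defs.

(* For x <> y the H(gamma, H) condition says that K(x, .) varies by at most a
   factor H on the ball B = B(y, gamma d(x, y)), which contains y and has
   positive finite measure. Hence the average of K(x, .) over B, which is
   Ktilde(x, y), lies between K(x, y) / H and H K(x, y). On the diagonal the
   claim reduces to H >= 1. *)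
From HB Require Import structures.
From mathcomp Require Import all_boot all_order all_algebra.
From mathcomp Require Import all_classical all_reals all_analysis.
From mathcomp Require Import lra measurable_realfun.
Set Implicit Arguments. Unset Strict Implicit. Unset Printing Implicit Defensive.
Import Order.TTheory GRing.Theory Num.Theory.
Local Open Scope classical_set_scope.
Local Open Scope ring_scope.

Section average.
Context {d : measure_display} {T : measurableType d} {R : realType}.
Variable mu : {measure set T -> \bar R}.

Definition average (B : set T) (f : T -> R) : \bar R :=
  (((fine (mu B))^-1)%:E * \int[mu]_(z in B) (f z)%:E)%E.

Variables (B : set T) (f : T -> R) (lo hi : R).
Hypothesis mB : measurable B.
Hypothesis muB_gt0 : (0 < mu B)%E.
Hypothesis muB_fin : (mu B < +oo)%E.
Hypothesis mf : measurable_fun B f.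
Hypothesis lo_ge0 : 0 <= lo.
Hypothesis f_bounds : forall z, B z -> lo <= f z <= hi.

Let m := fine (mu B).

Let muBE : mu B = m%:E.
Proof. by rewrite fineK // ge0_fin_numE. Qed.

Let m_gt0 : 0 < m.
Proof. by rewrite -lte_fin -muBE. Qed.

Let f_ge0 z : B z -> (0 <= (f z)%:E)%E.
Proof. by move=> /f_bounds /andP[lo_f _]; rewrite lee_fin (le_trans lo_ge0). Qed.

Let mEf : measurable_fun B (EFin \o f).
Proof. exact/measurable_EFinP. Qed.

Let integral_ge : ((lo * m)%:E <= \int[mu]_(z in B) (f z)%:E)%E.
Proof.
rewrite EFinM -muBE -integral_cst //.
apply: ge0_le_integral => //.
by move=> z /f_bounds /andP[+ _]; rewrite lee_fin.
Qed.

Let integral_le : (\int[mu]_(z in B) (f z)%:E <= (hi * m)%:E)%E.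
Proof.
rewrite EFinM -muBE -integral_cst //.
apply: ge0_le_integral => //.
by move=> z /f_bounds /andP[_ +]; rewrite lee_fin.
Qed.

Lemma average_bounds : (lo%:E <= average B f <= hi%:E)%E.
Proof.
have If : (\int[mu]_(z in B) (f z)%:E)%E \is a fin_num.
  rewrite ge0_fin_numE ?integral_ge0 //.
  by apply: le_lt_trans integral_le _; rewrite ltry.
move: integral_ge integral_le; rewrite /average -(fineK If) -EFinM !lee_fin.
set I := fine _ => lo_I I_hi.
by rewrite mulrC ler_pdivlMr // ler_pdivrMr // lo_I I_hi.
Qed.

End average.

Section homogeneous_balls.
Context {d : measure_display} {X : measurableType d} {R : realType}.
Variables (dist : X -> X -> R) (tau : R).
Hypothesis qd : quasi_distance dist tau.

Lemma dist_gt0 x y : x <> y -> 0 < dist x y.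
Proof.
have [_ [d_ge0 [_ [d_eq0 _]]]] := qd => xy.
by rewrite lt_neqAle d_ge0 andbT; apply/eqP => /esym /d_eq0.
Qed.

Lemma qball_center y r : 0 < r -> qball dist y r y.
Proof.
have [_ [_ [_ [d_eq0 _]]]] := qd.
by rewrite /qball /= (proj2 (d_eq0 y y) erefl).
Qed.

Lemma homogeneous_qball_gt0 (mu : {measure set X -> \bar R}) A y r :
  homogeneous_type dist mu tau A -> 0 < r -> (0 < mu (qball dist y r))%E.
Proof.
move=> [_ [_ doubling]] r_gt0.
have [+ _] := doubling y (r / 2) (divr_gt0 r_gt0 (ltr0Sn _ 1)).
by rewrite mulrC divfK ?pnatr_eq0.
Qed.

End homogeneous_balls.

Section kernels.
Context {d : measure_display} {X : measurableType d} {R : realType}.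
Variables (dist : X -> X -> R) (mu : {measure set X -> \bar R}).
Variables (gamma H : R) (K : X -> X -> R).

Lemma class_H_harnack x y z1 z2 : 0 <= H -> class_H dist gamma H K -> x <> y ->
  qball dist y (gamma * dist x y) z1 -> qball dist y (gamma * dist x y) z2 ->
  K x z1 <= H * K x z2.
Proof.
move=> H_ge0 KH xy Bz1 Bz2; rewrite -lee_fin EFinM.
apply: le_trans (le_trans (KH x y xy) _); first by apply: ereal_sup_ubound; exists z1.
by apply: lee_wpmul2l; [rewrite lee_fin | apply: ereal_inf_lbound; exists z2].
Qed.

Lemma Ktilde_diag x : Ktilde dist mu gamma K x x = (K x x)%:E.
Proof. by rewrite /Ktilde; case: pselect. Qed.

Lemma Ktilde_off_diag x y : x <> y ->
  Ktilde dist mu gamma K x y = average mu (qball dist y (gamma * dist x y)) (K x).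
Proof. by rewrite /Ktilde; case: pselect. Qed.

End kernels.

Theorem lemma4p2 (R : realType) (d : measure_display) (X : measurableType d)
  (dist : X -> X -> R) (mu : {measure set X -> \bar R}) (tau A gamma H : R)
  (Kfam : set (X -> X -> R)) :
  homogeneous_type dist mu tau A ->
  unbounded_space mu ->
  0 < gamma -> gamma < tau^-1 -> 1 <= H ->
  (forall K, Kfam K -> sym_markov_kernel mu K) ->
  (forall K, Kfam K -> class_H dist gamma H K) ->
  forall K, Kfam K -> forall x y : X,
    ((K x y)%:E <= H%:E * Ktilde dist mu gamma K x y)%E /\
    (H%:E * Ktilde dist mu gamma K x y <= (H ^+ 2)%:E * (K x y)%:E)%E.
Proof.
move=> hom _ gamma_gt0 _ H_ge1 markov KH K KK x y.
have [[qd [mball doubling]] [K_ge0 [_ [mK _]]]] := (hom, markov K KK).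
have H_gt0 : 0 < H by lra.
case: (pselect (x = y)) => [<-|xy].
  rewrite Ktilde_diag -!EFinM !lee_fin expr2 -mulrA.
  by rewrite !ler_peMl // ?mulr_ge0 // ltW.
set B := qball dist y (gamma * dist x y).
have r_gt0 : 0 < gamma * dist x y by rewrite mulr_gt0 // (dist_gt0 qd).
have harnack z1 z2 : B z1 -> B z2 -> K x z1 <= H * K x z2.
  exact: class_H_harnack (ltW H_gt0) (KH K KK) xy.
have By : B y by apply: (qball_center qd).
have /andP[lo hi] : ((K x y / H)%:E <= average mu B (K x) <= (H * K x y)%:E)%E.
  apply: average_bounds; rewrite ?divr_ge0 ?(ltW H_gt0) //.
  - exact: mball.
  - exact: homogeneous_qball_gt0 _ hom r_gt0.
  - by have [_ [_ +]] := doubling y _ r_gt0.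
  - exact/measurable_funTS/(measurable_fun_pair2 x mK).
  - by move=> z Bz; rewrite ler_pdivrMr // [_ * H]mulrC !harnack.
have H_ge0 : (0 <= H%:E)%E by rewrite lee_fin ltW.
rewrite Ktilde_off_diag //; split.
- rewrite -(divfK (lt0r_neq0 H_gt0) (K x y)) mulrC EFinM.
  exact: lee_wpmul2l H_ge0 _ _ lo.
- rewrite -EFinM expr2 -mulrA EFinM.
  exact: lee_wpmul2l H_ge0 _ _ hi.
Qed.
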